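(* Let $\Sigma$ be an alphabet and $K\subseteq\mathbb{M}_\xi\Sigma$ a language such that the syntactic congruence $\preceq_K$ is a congruence ordering on $\mathbb{M}\Sigma$. For every surjective morphism $\varphi:\mathbb{M}\Sigma\to\mathfrak{A}$ of $\mathbb{M}$-algebras that recognises $K$, there exists a unique morphism $\varrho:\mathfrak{A}\to\mathrm{Syn}(K)$ such that $\mathrm{syn}_K=\varrho\circ\varphi$.
   Context: Fix a set $\Xi$ of sorts. $\mathsf{Pos}^\Xi$ is the category of $\Xi$-sorted families $A=(A_\xi)_\xi$ of partial orders (''sets'', identified with disjoint unions; elements of distinct sorts incomparable) with sort-wise order-preserving maps (''functions''). A set is unordered if its order is equality. $\mathbb{M}$ is a monad on $\mathsf{Pos}^\Xi$ (functor with $\mathrm{flat}:\mathbb{M}\mathbb{M}\Rightarrow\mathbb{M}$, $\mathrm{sing}:\mathrm{Id}\Rightarrow\mathbb{M}$ satisfying the monad laws) which preserves injective, surjective and bijective functions, preserves preimages ($\mathbb{M}(f^{-1}[P])=(\mathbb{M}f)^{-1}[\mathbb{M}P]$), and uses the standard ordering (the order of $\mathbb{M}A$ is the relation $\{(\mathbb{M}p(u),\mathbb{M}q(u)):u\in\mathbb{M}R\}$, $R$ the order of $A$, $p,q$ the projections). An $\mathbb{M}$-algebra is $\langle A,\pi\rangle$ with $\pi:\mathbb{M}A\to A$, $\pi\circ\mathbb{M}\pi=\pi\circ\mathrm{flat}$, $\pi\circ\mathrm{sing}=\mathrm{id}$; morphisms satisfy $\varphi\circ\pi=\pi\circ\mathbb{M}\varphi$;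 $\langle\mathbb{M}\Sigma,\mathrm{flat}\rangle$ is the free algebra. An alphabet is a finite unordered set $\Sigma\in\mathsf{Pos}^\Xi$; a language is $K\subseteq\mathbb{M}_\xi\Sigma$. A function $f:\mathbb{M}\Sigma\to A$ recognises $K$ if $K=f^{-1}[P]$ for an upwards closed $P\subseteq A_\xi$. Contexts: for an algebra $\mathfrak{A}$ and a sort $\zeta$, a context with hole of sort $\zeta$ is $p\in\mathbb{M}(A+\{\Box\})$ with $\Box$ a new symbol of sort $\zeta$; for $a\in A_\zeta$, $p[a]:=\sigma_a(p)$ where $\sigma_a:\mathbb{M}(A+\{\Box\})\to\mathfrak{A}$ is the unique algebra morphism extending $\Box\mapsto a$, $c\mapsto c$; elements of $\mathbb{M}(\Sigma+\{\Box\})$ are regarded as contexts of $\mathbb{M}\Sigma$ via $\mathbb{M}(\mathrm{sing}+\mathrm{id})$. For upwards closed $K\subseteq A_\xi$, the syntactic congruence is $a\preceq_K b$ (for $a,b$ of the same sort $\zeta$) iff for every context $p\in\mathbb{M}_\xi(A+\{\Box\})$ with hole of sort $\zeta$, $p[a]\in K$ implies $p[b]\in K$. A preorder $\sqsubseteq$ containing the order of $A$ is a congruence ordering if $\mathbb{M}q(s)\leq\mathbb{M}q(t)$ implies $\pi(s)\sqsubseteq\pi(t)$, where $q:A\to A/{\sqsubseteq}$ is the quotient map onto the ordered set of $\sqsubseteq$-classes ($[a]\leq[b]$ iff $a\sqsubseteq b$); then $A/{\sqsubseteq}$ is the $\mathbb{M}$-algebra whose product is the unique function with $\pi\circ\mathbb{M}q=q\circ\pi$.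 $\mathrm{Syn}(K):=\mathfrak{A}/{\preceq_K}$ (here $\mathfrak{A}=\mathbb{M}\Sigma$) and $\mathrm{syn}_K$ is the quotient map. *)

From Stdlib Require Import List ClassicalEpsilon FunctionalExtensionality
  PropExtensionality ProofIrrelevance.
Set Implicit Arguments.
Unset Strict Implicit.

(* A Xi-sorted family of partial orders, presented as a disjoint union:
   a carrier with a sort function; elements of distinct sorts are incomparable. *)
Record SPos (Xi : Type) : Type := SPosMk {
  car :> Type;
  srt : car -> Xi;
  le : car -> car -> Prop;
  le_refl : forall x, le x x;
  le_trans : forall x y z, le x y -> le y z -> le x z;
  le_antisym : forall x y, le x y -> le y x -> x = y;
  le_srt : forall x y, le x y -> srt x = srt y }.
Arguments srt {Xi A} _ : rename.
Arguments le {Xi A} _ _ : rename.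

Record SMap (Xi : Type) (A B : SPos Xi) := SMapMk {
  fn :> A -> B;
  fn_srt : forall x, srt (fn x) = srt x;
  fn_mono : forall x y, le x y -> le (fn x) (fn y) }.

Definition idS (Xi : Type) (A : SPos Xi) : SMap A A :=
  @SMapMk Xi A A (fun x => x) (fun x => eq_refl) (fun x y h => h).

Definition compS (Xi : Type) (A B C : SPos Xi) (g : SMap B C) (f : SMap A B)
  : SMap A C.
Proof.
  refine (@SMapMk Xi A C (fun x => g (f x)) _ _).
  - intro x. rewrite (fn_srt g), (fn_srt f). reflexivity.
  - intros x y h. apply fn_mono, fn_mono, h.
Defined.

Definition injectiveF (X Y : Type) (f : X -> Y) := forall x y, f x = f y -> x = y.
Definition surjectiveF (X Y : Type) (f : X -> Y) := forall y, exists x, f x = y.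

Definition subS (Xi : Type) (A : SPos Xi) (P : A -> Prop) : SPos Xi.
Proof.
  refine (@SPosMk Xi {x : A | P x} (fun x => srt (proj1_sig x))
            (fun x y => le (proj1_sig x) (proj1_sig y)) _ _ _ _).
  - intros; apply le_refl.
  - intros x y z; apply le_trans.
  - intros [x px] [y py] h1 h2; simpl in *.
    pose proof (le_antisym h1 h2); subst y. f_equal; apply proof_irrelevance.
  - intros x y; apply le_srt.
Defined.

Definition inclS (Xi : Type) (A : SPos Xi) (P : A -> Prop) : SMap (subS P) A :=
  @SMapMk Xi (subS P) A (fun x => proj1_sig x) (fun x => eq_refl) (fun x y h => h).

Definition relS (Xi : Type) (A : SPos Xi) : SPos Xi.
Proof.
  refine (@SPosMk Xi {p : A * A | le (fst p) (snd p)} (fun p => srt (fst (proj1_sig p)))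
            (fun p q => le (fst (proj1_sig p)) (fst (proj1_sig q)) /\
                        le (snd (proj1_sig p)) (snd (proj1_sig q))) _ _ _ _).
  - intros; split; apply le_refl.
  - intros x y z [h1 h2] [h3 h4]; split; eapply le_trans; eauto.
  - intros [[x1 x2] px] [[y1 y2] py] [h1 h2] [h3 h4]; simpl in *.
    pose proof (le_antisym h1 h3); pose proof (le_antisym h2 h4); subst.
    f_equal; apply proof_irrelevance.
  - intros x y [h1 _]; apply le_srt, h1.
Defined.

Definition projL (Xi : Type) (A : SPos Xi) : SMap (relS A) A :=
  @SMapMk Xi (relS A) A (fun p => fst (proj1_sig p)) (fun p => eq_refl)
    (fun p q h => proj1 h).

Definition projR (Xi : Type) (A : SPos Xi) : SMap (relS A) A.
Proof.
  refine (@SMapMk Xi (relS A) A (fun p => snd (proj1_sig p)) _ (fun p q h => proj2 h)).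
  intros [[x y] h]; simpl. symmetry. apply le_srt, h.
Defined.

(* A + {box}, box a new (incomparable) element of sort zeta. *)
Definition holeS (Xi : Type) (A : SPos Xi) (zeta : Xi) : SPos Xi.
Proof.
  refine (@SPosMk Xi (option A)
            (fun o => match o with Some a => srt a | None => zeta end)
            (fun o1 o2 => match o1, o2 with
                          | Some a, Some b => le a b
                          | None, None => True
                          | _, _ => False end) _ _ _ _).
  - intros [a|]; [apply le_refl | exact I].
  - intros [a|] [b|] [c|]; try tauto. apply le_trans.
  - intros [a|] [b|]; try tauto. intros h1 h2; f_equal; apply le_antisym; auto.
  - intros [a|] [b|]; try tauto. apply le_srt.
Defined.

Definition ctxmap (Xi : Type) (A : SPos Xi) (zeta : Xi) (a : A) (e : srt a = zeta)
  : SMap (holeS A zeta) A.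
Proof.
  refine (@SMapMk Xi (holeS A zeta) A
            (fun o => match o with Some c => c | None => a end) _ _).
  - intros [c|]; simpl; [reflexivity | exact e].
  - intros [c|] [d|]; simpl; try tauto. intros _; apply le_refl.
Defined.

Record Monad (Xi : Type) := MonadMk {
  Mo : SPos Xi -> SPos Xi;
  Mmap : forall A B : SPos Xi, SMap A B -> SMap (Mo A) (Mo B);
  Mmap_ext : forall (A B : SPos Xi) (f g : SMap A B),
      (forall x, f x = g x) -> forall u, Mmap f u = Mmap g u;
  Mmap_id : forall (A : SPos Xi) (u : Mo A), Mmap (idS A) u = u;
  Mmap_comp : forall (A B C : SPos Xi) (f : SMap A B) (g : SMap B C) (u : Mo A),
      Mmap (compS g f) u = Mmap g (Mmap f u);
  sing : forall A : SPos Xi, SMap A (Mo A);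
  flat : forall A : SPos Xi, SMap (Mo (Mo A)) (Mo A);
  sing_nat : forall (A B : SPos Xi) (f : SMap A B) (x : A),
      Mmap f (sing A x) = sing B (f x);
  flat_nat : forall (A B : SPos Xi) (f : SMap A B) (u : Mo (Mo A)),
      Mmap f (flat A u) = flat B (Mmap (Mmap f) u);
  flat_sing : forall (A : SPos Xi) (u : Mo A), flat A (sing (Mo A) u) = u;
  flat_Msing : forall (A : SPos Xi) (u : Mo A), flat A (Mmap (sing A) u) = u;
  flat_assoc : forall (A : SPos Xi) (u : Mo (Mo (Mo A))),
      flat A (flat (Mo A) u) = flat A (Mmap (flat A) u);
  pres_inj : forall (A B : SPos Xi) (f : SMap A B),
      injectiveF f -> injectiveF (Mmap f);
  pres_surj : forall (A B : SPos Xi) (f : SMap A B),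
      surjectiveF f -> surjectiveF (Mmap f);
  pres_bij : forall (A B : SPos Xi) (f : SMap A B),
      injectiveF f -> surjectiveF f ->
      injectiveF (Mmap f) /\ surjectiveF (Mmap f);
  (* M(f^{-1}[P]) = (Mf)^{-1}[MP], subsets of MA resp. MB via M(inclusion) *)
  pres_preimage : forall (A B : SPos Xi) (f : SMap A B) (P : B -> Prop) (u : Mo A),
      (exists v : Mo (subS P), Mmap (inclS P) v = Mmap f u) <->
      (exists w : Mo (subS (fun x => P (f x))),
          Mmap (inclS (fun x => P (f x))) w = u);
  std_order : forall (A : SPos Xi) (u v : Mo A),
      le u v <-> exists w : Mo (relS A),
        Mmap (projL A) w = u /\ Mmap (projR A) w = v }.
Arguments Mo {Xi} _ _.
Arguments Mmap {Xi} _ {A B} _.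
Arguments sing {Xi} _ _.
Arguments flat {Xi} _ _.

Definition is_alg (Xi : Type) (M : Monad Xi) (A : SPos Xi) (pi : SMap (Mo M A) A) :=
  (forall u : Mo M (Mo M A), pi (Mmap M pi u) = pi (flat M A u)) /\
  (forall a : A, pi (sing M A a) = a).

Definition is_morph (Xi : Type) (M : Monad Xi) (A B : SPos Xi)
  (piA : SMap (Mo M A) A) (piB : SMap (Mo M B) B) (phi : SMap A B) :=
  forall u : Mo M A, phi (piA u) = piB (Mmap M phi u).

Definition is_alphabet (Xi : Type) (Sig : SPos Xi) :=
  (forall x y : Sig, le x y <-> x = y) /\ exists l : list Sig, forall x, In x l.

Definition recognises (Xi : Type) (M : Monad Xi) (Sig A : SPos Xi) (xi : Xi)
  (K : Mo M Sig -> Prop) (f : SMap (Mo M Sig) A) :=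
  exists P : A -> Prop,
    (forall a, P a -> srt a = xi) /\
    (forall a b, P a -> le a b -> P b) /\
    (forall u, K u <-> P (f u)).

(* p[a] := sigma_a(p), sigma_a the algebra morphism from the free algebra
   M(A + {box}) extending box |-> a, c |-> c; i.e. sigma_a = pi o M(g). *)
Definition fill (Xi : Type) (M : Monad Xi) (A : SPos Xi) (pi : SMap (Mo M A) A)
  (zeta : Xi) (p : Mo M (holeS A zeta)) (a : A) (e : srt a = zeta) : A :=
  pi (Mmap M (ctxmap e) p).
Arguments fill {Xi M A} pi {zeta} p a e.

Definition synle (Xi : Type) (M : Monad Xi) (Sig : SPos Xi) (xi : Xi)
  (K : Mo M Sig -> Prop) (a b : Mo M Sig) : Prop :=
  exists e : srt b = srt a,
    forall p : Mo M (holeS (Mo M Sig) (srt a)), srt p = xi ->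
      K (fill (flat M Sig) p a eq_refl) -> K (fill (flat M Sig) p b e).

Record SPre (Xi : Type) (A : SPos Xi) := SPreMk {
  rel : A -> A -> Prop;
  rel_refl : forall x, rel x x;
  rel_trans : forall x y z, rel x y -> rel y z -> rel x z;
  rel_srt : forall x y, rel x y -> srt x = srt y;
  rel_le : forall x y, le x y -> rel x y }.

Definition cls (Xi : Type) (A : SPos Xi) (r : SPre A) (a : A) : A -> Prop :=
  fun b => rel r a b /\ rel r b a.

Definition rep (Xi : Type) (A : SPos Xi) (r : SPre A)
  (S : {S : A -> Prop | exists a, S = cls r a}) : A :=
  proj1_sig (constructive_indefinite_description _ (proj2_sig S)).

Lemma rep_spec (Xi : Type) (A : SPos Xi) (r : SPre A)
  (S : {S : A -> Prop | exists a, S = cls r a}) : proj1_sig S = cls r (rep S).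
Proof. unfold rep. destruct (constructive_indefinite_description _ _). exact e. Qed.

Lemma cls_eq (Xi : Type) (A : SPos Xi) (r : SPre A) (a c : A) :
  cls r a = cls r c -> rel r a c /\ rel r c a.
Proof.
  intro h. assert (hc : cls r c c) by (split; apply rel_refl).
  rewrite <- h in hc. exact hc.
Qed.

Definition qS (Xi : Type) (A : SPos Xi) (r : SPre A) : SPos Xi.
Proof.
  refine (@SPosMk Xi {S : A -> Prop | exists a, S = cls r a}
            (fun S => srt (rep S)) (fun S T => rel r (rep S) (rep T)) _ _ _ _).
  - intros; apply rel_refl.
  - intros x y z; apply rel_trans.
  - intros S T h1 h2.
    assert (E : proj1_sig S = proj1_sig T).
    { rewrite (rep_spec S), (rep_spec T).
      apply functional_extensionality; intro b; apply propositional_extensionality.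
      unfold cls; split; intros [h3 h4]; split; eauto using rel_trans. }
    destruct S as [S pS], T as [T pT]; simpl in E; subst T.
    f_equal; apply proof_irrelevance.
  - intros S T; apply rel_srt.
Defined.

Definition qmap (Xi : Type) (A : SPos Xi) (r : SPre A) : SMap A (qS r).
Proof.
  refine (@SMapMk Xi A (qS r)
            (fun a => exist (fun S => exists a, S = cls r a) (cls r a) (ex_intro _ a eq_refl))
            _ _).
  - intro a; simpl.
    set (S := exist (fun S => exists a, S = cls r a) (cls r a) (ex_intro _ a eq_refl)).
    pose proof (rep_spec S) as h; simpl in h. apply cls_eq in h as [h1 h2].
    apply (rel_srt h2).
  - intros a b hab; simpl.
    set (S := exist (fun S => exists a, S = cls r a) (cls r a) (ex_intro _ a eq_refl)).
    set (T := exist (fun S => exists a, S = cls r a) (cls r b) (ex_intro _ b eq_refl)).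
    pose proof (rep_spec S) as h; simpl in h. apply cls_eq in h as [h1 h2].
    pose proof (rep_spec T) as h'; simpl in h'. apply cls_eq in h' as [h3 h4].
    change (rel r (rep S) (rep T)).
    eapply rel_trans; [exact h2|]. eapply rel_trans; [apply rel_le, hab|]. exact h3.
Defined.

Definition congr_ord (Xi : Type) (M : Monad Xi) (A : SPos Xi) (pi : SMap (Mo M A) A)
  (r : SPre A) :=
  forall s t : Mo M A, le (Mmap M (qmap r) s) (Mmap M (qmap r) t) -> rel r (pi s) (pi t).

Arguments synle {Xi} M {Sig} xi K a b.
Arguments recognises {Xi M Sig A} xi K f.
Arguments congr_ord {Xi M A} pi r.
Arguments is_morph {Xi M A B} piA piB phi.
Arguments is_alg {Xi M A} pi.
Arguments qS {Xi A} r.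
Arguments qmap {Xi A} r.

From Stdlib Require Import ClassicalEpsilon.
Set Implicit Arguments.
Unset Strict Implicit.

(* Since φ is a morphism, φ of a context filled with u depends monotonically on
   φ u (M preserves pointwise order by the standard ordering); as φ recognises K
   through an upward closed set, φ u ≤ φ v forces u ⪯_K v.  So syn_K is monotone
   along the surjection φ and factors through it; the factor is a morphism since
   M preserves surjections, and unique since φ is onto.  The congruence-ordering
   hypothesis only serves to make the product of Syn(K) exist. *)

Section Factorisation.

Variables (Xi : Type) (M : Monad Xi).

Lemma Mmap_le (B C : SPos Xi) (f g : SMap B C) :
  (forall x, le (f x) (g x)) -> forall u : Mo M B, le (Mmap M f u) (Mmap M g u).
Proof.
  intros Hfg u.
  unshelve eset (fg := @SMapMk Xi B (relS C) (fun x => exist _ (f x, g x) (Hfg x)) _ _).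
  - intro x. apply fn_srt.
  - intros x y hxy. split; apply fn_mono, hxy.
  - apply std_order. exists (Mmap M fg u).
    split; rewrite <- Mmap_comp; apply Mmap_ext; reflexivity.
Qed.

Lemma morph_fill_le (B A : SPos Xi) (piB : SMap (Mo M B) B) (piA : SMap (Mo M A) A)
  (phi : SMap B A) (zeta : Xi) (p : Mo M (holeS B zeta))
  (u v : B) (eu : srt u = zeta) (ev : srt v = zeta) :
  is_morph piB piA phi -> le (phi u) (phi v) ->
  le (phi (fill piB p u eu)) (phi (fill piB p v ev)).
Proof.
  intros Hphi huv. unfold fill. rewrite !Hphi, <- !Mmap_comp.
  apply fn_mono, Mmap_le.
  intros [c|]; [apply le_refl | exact huv].
Qed.

Lemma recognises_synle (Sig A : SPos Xi) (xi : Xi) (K : Mo M Sig -> Prop)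
  (piA : SMap (Mo M A) A) (phi : SMap (Mo M Sig) A) :
  is_morph (flat M Sig) piA phi -> recognises xi K phi ->
  forall u v, le (phi u) (phi v) -> synle M xi K u v.
Proof.
  intros Hphi [P [_ [P_up HKP]]] u v huv.
  assert (e : srt v = srt u).
  { rewrite <- (fn_srt phi u), <- (fn_srt phi v). symmetry. exact (le_srt huv). }
  exists e. intros p _ Ku.
  apply HKP; apply HKP in Ku.
  exact (P_up _ _ Ku (morph_fill_le p eq_refl e Hphi huv)).
Qed.

Lemma factor_through_surj (B A C : SPos Xi) (phi : SMap B A) (g : SMap B C) :
  surjectiveF phi -> (forall u v, le (phi u) (phi v) -> le (g u) (g v)) ->
  exists rho : SMap A C, forall u, g u = rho (phi u).
Proof.
  intros Hsurj Hg.
  set (pre := fun a => proj1_sig (constructive_indefinite_description _ (Hsurj a))).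
  assert (phi_pre : forall a, phi (pre a) = a)
    by (intro a; exact (proj2_sig (constructive_indefinite_description _ (Hsurj a)))).
  unshelve eexists (@SMapMk Xi A C (fun a => g (pre a)) _ _).
  - intro a. simpl. rewrite fn_srt, <- (fn_srt phi), phi_pre. reflexivity.
  - intros a b hab. apply Hg. rewrite !phi_pre. exact hab.
  - intro u. simpl.
    apply le_antisym; apply Hg; rewrite phi_pre; apply le_refl.
Qed.

Lemma factor_is_morph (B A C : SPos Xi) (piB : SMap (Mo M B) B)
  (piA : SMap (Mo M A) A) (piC : SMap (Mo M C) C)
  (phi : SMap B A) (g : SMap B C) (rho : SMap A C) :
  surjectiveF phi -> is_morph piB piA phi -> is_morph piB piC g ->
  (forall u, g u = rho (phi u)) -> is_morph piA piC rho.
Proof.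
  intros Hsurj Hphi Hg Hrho U.
  destruct (pres_surj Hsurj U) as [V <-].
  rewrite <- Hphi, <- Hrho, Hg, <- Mmap_comp.
  f_equal. apply Mmap_ext. exact Hrho.
Qed.

End Factorisation.

Lemma qmap_le (Xi : Type) (A : SPos Xi) (r : SPre A) (a b : A) :
  rel r a b -> le (qmap r a) (qmap r b).
Proof.
  intro hab.
  destruct (cls_eq (rep_spec (qmap r a))) as [_ ha].
  destruct (cls_eq (rep_spec (qmap r b))) as [hb _].
  change (rel r (rep (qmap r a)) (rep (qmap r b))).
  eapply rel_trans; [exact ha |]. eapply rel_trans; [exact hab | exact hb].
Qed.

Theorem theorem4p7 (Xi : Type) (M : Monad Xi) (Sig : SPos Xi) (xi : Xi)
  (K : Mo M Sig -> Prop)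
  (Halph : is_alphabet Sig)
  (HK : forall u, K u -> srt u = xi)
  (* the syntactic congruence of K is a congruence ordering *)
  (r : SPre (Mo M Sig))
  (Hr : forall a b, rel r a b <-> synle M xi K a b)
  (Hcong : congr_ord (flat M Sig) r)
  (* the product of Syn(K) = (M Sigma)/r: the function with pi o Mq = q o flat *)
  (piS : SMap (Mo M (qS r)) (qS r))
  (HpiS : forall s, piS (Mmap M (qmap r) s) = qmap r (flat M Sig s))
  (A : SPos Xi) (piA : SMap (Mo M A) A) (HA : is_alg piA)
  (phi : SMap (Mo M Sig) A) (Hphi : is_morph (flat M Sig) piA phi)
  (Hsurj : surjectiveF phi) (Hrec : recognises xi K phi) :
  exists rho : SMap A (qS r),
    is_morph piA piS rho /\ (forall u, qmap r u = rho (phi u)) /\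
    (forall rho' : SMap A (qS r),
        is_morph piA piS rho' -> (forall u, qmap r u = rho' (phi u)) ->
        forall a, rho' a = rho a).
Proof.
  assert (syn_morph : is_morph (flat M Sig) piS (qmap r))
    by (intro u; symmetry; apply HpiS).
  assert (syn_mono : forall u v, le (phi u) (phi v) -> le (qmap r u) (qmap r v))
    by (intros u v huv; apply qmap_le, Hr, (recognises_synle Hphi Hrec huv)).
  destruct (factor_through_surj Hsurj syn_mono) as [rho Hrho].
  exists rho. split; [| split].
  - exact (factor_is_morph Hsurj Hphi syn_morph Hrho).
  - exact Hrho.
  - intros rho' _ Hrho' a. destruct (Hsurj a) as [u <-].
    rewrite <- Hrho', Hrho. reflexivity.
Qed.
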